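(* Let $a_i<b_i$ ($i=1,\dots,n$) be real numbers and let $u:\prod_{i=1}^n[a_i,b_i]\to[0,\infty]$ be a convex function. Then for every $x=(x_1,\dots,x_n)$ in the open box $\prod_{i=1}^n(a_i,b_i)$, \[ u(x)\le \int_{\prod_{i=1}^n[a_i,b_i]}u\,d\mathbf{x}\cdot\frac{1}{\prod_{i=1}^n\min\{x_i-a_i,\;b_i-x_i\}}, \] where $d\mathbf{x}$ denotes the $n$-dimensional Lebesgue measure. (At boundary points of the box the right-hand side is $+\infty$ and the inequality is trivial.)
   Context: A convex function with values in $[0,\infty]$ means $u((1-t)x+ty)\le(1-t)u(x)+tu(y)$ for all $x,y$ and $t\in[0,1]$, with the usual conventions for $+\infty$. *)

From HB Require Import structures.
From mathcomp Require Import all_boot all_order all_algebra.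
From mathcomp Require Import all_classical all_reals all_analysis.
Set Implicit Arguments. Unset Strict Implicit. Unset Printing Implicit Defensive.
Import Order.TTheory GRing.Theory Num.Theory.
Local Open Scope classical_set_scope.
Local Open Scope ring_scope.

(* Points of R^n are represented as n.-tuples of reals; n.-tuple R carries
   the library's product (Borel) sigma-algebra (measurable_tuple). *)

(* n-dimensional Lebesgue measure, defined as the iterated product of the
   one-dimensional Lebesgue measure (product_measure1 construction, first
   coordinate integrated outermost):
     lebn 0 A      = 1 if the empty tuple is in A, 0 otherwise
     lebn (n+1) A  = \int_R lebn n (section of A at the first coordinate x) dx *)
Fixpoint lebn (R : realType) (n : nat) : set (n.-tuple R) -> \bar R :=
  match n as m return set (m.-tuple R) -> \bar R with
  | 0 => fun A => ((\1_A [tuple]) : R)%:E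
  | m.+1 => fun A =>
      (\int[@lebesgue_measure R]_x
          @lebn R m [set y : m.-tuple R | A [tuple of x :: y]])%E
  end.

Definition tcomb (R : realType) (n : nat) (t : R) (x y : n.-tuple R)
  : n.-tuple R :=
  [tuple (1 - t) * tnth x i + t * tnth y i | i < n].

Definition cbox (R : realType) (n : nat) (a b : 'I_n -> R) : set (n.-tuple R) :=
  [set x | forall i : 'I_n, a i <= tnth x i <= b i].
Definition obox (R : realType) (n : nat) (a b : 'I_n -> R) : set (n.-tuple R) :=
  [set x | forall i : 'I_n, a i < tnth x i < b i].

(* u : D -> [0, +oo] convex on the convex set D, with the usual conventions
   for +oo (in \bar R, 0 * +oo = 0). *)
Definition convex_on_ext (R : realType) (n : nat) (D : set (n.-tuple R))
  (u : n.-tuple R -> \bar R) : Prop :=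
  forall x y, D x -> D y -> forall t : R, 0 <= t <= 1 ->
    (u (tcomb t x y) <= (1 - t)%:E * u x + t%:E * u y)%E.

(* Sublevel-set proof of the pointwise bound for nonnegative convex functions
   on a box Q = prod_i [a_i, b_i]:  u(x) <= (int_Q u) / prod_i r_i  with
   r_i = min (x_i - a_i, b_i - x_i).

   Fix a real level 0 <= c < u(x).  The sublevel set K = {y in Q | u y <= c}
   is convex and misses x; by induction on the dimension (slicing along the
   first coordinate) a convex set missing x also misses one of the 2^n open
   orthants with vertex x.  In that orthant the open box with vertex x and
   side lengths r_i lies inside Q, and u > c there, so
   int_Q u >= c * prod_i r_i.  Letting c increase to u(x) gives the claim. *)
From HB Require Import structures.
From mathcomp Require Import all_boot all_order all_algebra.
From mathcomp Require Import all_classical all_reals all_analysis.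
From mathcomp Require Import ring lra.
Set Implicit Arguments. Unset Strict Implicit. Unset Printing Implicit Defensive.
Import Order.TTheory GRing.Theory Num.Theory.
Local Open Scope classical_set_scope.
Local Open Scope ring_scope.

Section ConvexSets.
Variable R : realType.

Lemma tnth_tcomb n t (x y : n.-tuple R) i :
  tnth (tcomb t x y) i = (1 - t) * tnth x i + t * tnth y i.
Proof. by rewrite /tcomb tnth_mktuple. Qed.

Lemma tcomb_cons n t (x0 y0 : R) (x y : n.-tuple R) :
  tcomb t [tuple of x0 :: x] [tuple of y0 :: y] =
  [tuple of (1 - t) * x0 + t * y0 :: tcomb t x y].
Proof.
apply: eq_from_tnth => i; case: (unliftP ord0 i) => [j ->|->].
  by rewrite tnth_tcomb !tnthS tnth_tcomb.
by rewrite tnth_tcomb !tnth0.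
Qed.

Lemma tcomb_same n t (x : n.-tuple R) : tcomb t x x = x.
Proof. by apply: eq_from_tnth => i; rewrite tnth_tcomb -mulrDl subrK mul1r. Qed.

Definition tconvex n (K : set (n.-tuple R)) : Prop :=
  forall y z t, K y -> K z -> 0 <= t <= 1 -> K (tcomb t y z).

Definition side (s : bool) (x0 t : R) : bool := if s then x0 < t else t < x0.

Lemma side_convex s x0 t1 t2 l : side s x0 t1 -> side s x0 t2 -> 0 <= l <= 1 ->
  side s x0 ((1 - l) * t1 + l * t2).
Proof.
move=> h1 h2 /andP[l0 l1]; rewrite /side; case: s h1 h2 => /= h1 h2.
- have q1 : 0 <= (1 - l) * (t1 - Num.min t1 t2).
    by apply: mulr_ge0; rewrite ?subr_ge0 ?ge_min ?lexx //; lra.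
  have q2 : 0 <= l * (t2 - Num.min t1 t2).
    by apply: mulr_ge0; rewrite ?subr_ge0 ?ge_min ?lexx ?orbT.
  have : x0 < Num.min t1 t2 by rewrite lt_min h1 h2.
  nra.
- have q1 : 0 <= (1 - l) * (Num.max t1 t2 - t1).
    by apply: mulr_ge0; rewrite ?subr_ge0 ?le_max ?lexx //; lra.
  have q2 : 0 <= l * (Num.max t1 t2 - t2).
    by apply: mulr_ge0; rewrite ?subr_ge0 ?le_max ?lexx ?orbT.
  have : Num.max t1 t2 < x0 by rewrite gt_max h1 h2.
  nra.
Qed.

(* The points z such that (t :: z) is in K for some t on the s-side of x0:
   the projection of the part of K lying on one side of the hyperplane
   {first coordinate = x0}. *)
Definition side_section n (K : set (n.+1.-tuple R)) (s : bool) (x0 : R) :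
  set (n.-tuple R) :=
  [set z : n.-tuple R | exists2 t, side s x0 t & K [tuple of t :: z]].

Lemma tconvex_side_section n (K : set (n.+1.-tuple R)) s x0 :
  tconvex K -> tconvex (side_section K s x0).
Proof.
move=> Kc y z l [t1 h1 K1] [t2 h2 K2] l01.
exists ((1 - l) * t1 + l * t2); first exact: side_convex.
by rewrite -tcomb_cons; apply: Kc.
Qed.

Lemma tconvex_both_sides n (K : set (n.+1.-tuple R)) x0 z :
  tconvex K -> side_section K true x0 z -> side_section K false x0 z ->
  K [tuple of x0 :: z].
Proof.
move=> Kc [t1 /= h1 K1] [t2 /= h2 K2].
have d0 : 0 < t1 - t2 by lra.
pose l := (t1 - x0) / (t1 - t2).
have l01 : 0 <= l <= 1.
  by rewrite divr_ge0 ?ler_pdivrMr ?mul1r /=; lra.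
have := Kc _ _ l K1 K2 l01; rewrite tcomb_cons tcomb_same.
suff -> : (1 - l) * t1 + l * t2 = x0 by [].
by rewrite /l; field; lra.
Qed.

Definition orthant n (s : n.-tuple bool) (x y : n.-tuple R) : Prop :=
  forall i, side (tnth s i) (tnth x i) (tnth y i).

Lemma orthant_cons n s0 x0 y0 (s : n.-tuple bool) (x y : n.-tuple R) :
  orthant [tuple of s0 :: s] [tuple of x0 :: x] [tuple of y0 :: y] ->
  side s0 x0 y0 /\ orthant s x y.
Proof.
move=> H; split; first by have := H ord0; rewrite !tnth0.
by move=> i; have := H (lift ord0 i); rewrite !tnthS.
Qed.

(* Orthant lemma: a convex set K not containing x misses some open orthant
   with vertex x.  By the previous lemma, one of the two side sections of K
   misses the tail of x; apply induction to it. *)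
Lemma tconvex_avoid_orthant n (K : set (n.-tuple R)) (x : n.-tuple R) :
  tconvex K -> ~ K x -> exists s, forall y, orthant s x y -> ~ K y.
Proof.
elim: n K x => [|n IH] K x Kc Kx.
  by exists [tuple] => y _; rewrite (tuple0 y) -(tuple0 x).
case/tupleP: x Kx => x0 x Kx.
have [s0 s0x] : exists s0, ~ side_section K s0 x0 x.
  case: (pselect (side_section K true x0 x)) => [Kt|]; last by exists true.
  by exists false => Kf; apply: Kx; exact: tconvex_both_sides.
have [s Hs] := IH _ x (tconvex_side_section (s := s0) (x0 := x0) Kc) s0x.
exists [tuple of s0 :: s] => y; case/tupleP: y => y0 y /orthant_cons[y0s ys] Ky.
by apply: (Hs y ys); exists y0.
Qed.

End ConvexSets.

(* The integral \int[mu] is defined for any set function mu, through simple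
   functions.  For a set function vanishing on the empty set, the integral
   of a nonnegative u over D is at least c * mu S whenever u >= c on a
   measurable S contained in D; this is all the integration theory needed,
   which matters since lebn is not given a measure structure. *)
Section SetFunctionIntegral.
Local Open Scope ereal_scope.
Import HBNNSimple.
Context d (T : measurableType d) (R : realType).
Variable mu : set T -> \bar R.
Hypothesis mu0 : mu set0 = 0.

Lemma sintegral_eq0 (h : {nnsfun T >-> R}) : (forall x, h x = 0%R) ->
  sintegral mu h = 0.
Proof.
move=> h0; apply: fsbig1 => r _.
have [->|r0] := eqVneq r 0%R; first by rewrite mul0e.
rewrite (_ : h @^-1` [set r] = set0) ?mu0 ?mule0//.
by apply/seteqP; split => // x /=; rewrite h0 => /esym/eqP; rewrite (negbTE r0).
Qed.

Lemma sintegral_scale_indic (S : set T) (mS : measurable S) (c : R)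
    (c0 : (0 <= c)%R) :
  sintegral mu (scale_nnsfun (indic_nnsfun R mS) c0) = c%:E * mu S.
Proof.
rewrite /sintegral -(fsbig_widen [set c]) //; last first.
  move=> r [_ /= rc]; have [->|r0] := eqVneq r 0%R; first by rewrite mul0e.
  rewrite (_ : _ @^-1` [set r] = set0) ?mu0 ?mule0//.
  apply/seteqP; split => // x /=; rewrite measurable_realfun.mindicE.
  case: (x \in S); rewrite ?mulr1 ?mulr0 => /esym/eqP; last by rewrite (negbTE r0).
  by move: rc => /eqP; rewrite eq_sym => /negbTE ->.
rewrite fsbig_set1; have [c_eq0|c_neq0] := eqVneq c 0%R.
  by rewrite (_ : c%:E = 0) ?mul0e // c_eq0.
congr (_ * mu _); apply/seteqP; split => x /=.
  rewrite measurable_realfun.mindicE; case: (boolP (x \in S)) => [/set_mem//|_].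
  by rewrite mulr0 => /esym/eqP; rewrite (negbTE c_neq0).
by rewrite measurable_realfun.mindicE => /mem_set ->; rewrite mulr1.
Qed.

Lemma integral_ge_level (D S : set T) (u : T -> \bar R) (c : R) :
  measurable S -> (0 <= c)%R ->
  (forall y, D y -> 0 <= u y) -> S `<=` D -> (forall y, S y -> c%:E <= u y) ->
  c%:E * mu S <= \int[mu]_(y in D) u y.
Proof.
move=> mS c0 u0 SD Su; rewrite /integral /=.
have uD0 x : setT x -> 0 <= (u \_ D) x.
  by move=> _; rewrite /patch; case: ifPn => [/set_mem/u0//|_].
set negpart := (X in _ - X).
have -> : negpart = 0.
  apply/eqP; rewrite eq_le; apply/andP; split.
    apply: ge_ereal_sup => _ [h /= hle <-]; rewrite sintegral_eq0// => x.
    apply/eqP; rewrite eq_le fun_ge0 andbT -lee_fin; apply: le_trans (hle x) _.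
    by rewrite (ge0_funenegE uD0 (in_setT x)).
  apply: ereal_sup_ubound; exists nnsfun0; last by rewrite sintegral_eq0.
  by move=> x /=; exact: funeneg_ge0.
rewrite sube0; apply: ereal_sup_ubound.
exists (scale_nnsfun (indic_nnsfun R mS) c0); last exact: sintegral_scale_indic.
move=> x /=; rewrite measurable_realfun.mindicE.
case: (boolP (x \in S)) => [/set_mem Sx|_].
  rewrite mulr1 (ge0_funeposE uD0 (in_setT x)) /patch mem_set; first exact: Su.
  exact: SD.
by rewrite mulr0; exact: funepos_ge0.
Qed.

Lemma integral_ge0_setfun (D : set T) (u : T -> \bar R) :
  (forall y, D y -> 0 <= u y) -> 0 <= \int[mu]_(y in D) u y.
Proof.
move=> u0; have := integral_ge_level measurable0 (lexx 0%R) u0 (sub0set D).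
by rewrite mul0e; apply.
Qed.

End SetFunctionIntegral.

Section LebesgueBoxes.
Variable R : realType.
Local Open Scope ereal_scope.

Lemma lebn0 n : lebn (set0 : set (n.-tuple R)) = 0.
Proof.
elim: n => [|n IH] /=; first by rewrite indicE in_set0.
rewrite (_ : [set y | _] = set0); last by apply/seteqP; split.
by rewrite IH integral0.
Qed.

(* Open boxes are measurable: finite intersections of cylinders over open
   intervals. *)
Lemma obox_measurable n (lo hi : 'I_n -> R) : measurable (obox lo hi).
Proof.
have -> : obox lo hi = \bigcap_(i in [set: 'I_n])
    ([set: n.-tuple R] `&` (fun y => tnth y i) @^-1` `]lo i, hi i[%classic).
  apply/seteqP; split => y /=.
    by move=> H i _; split => //=; rewrite in_itv /= H.
  by move=> H i; have [_ /=] := H i I; rewrite in_itv.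
apply: fin_bigcap_measurable; first exact: finite_finset.
by move=> i _; apply: (measurable_tnth i) => //; exact: measurable_itv.
Qed.

(* lebn gives an open box its elementary volume: the slice of the box at a
   first coordinate x is a lower-dimensional box when x is in the first
   edge, and empty otherwise. *)
Lemma lebn_obox n (lo hi : 'I_n -> R) : (forall i, lo i <= hi i)%R ->
  lebn (obox lo hi) = (\prod_(i < n) (hi i - lo i))%:E.
Proof.
elim: n lo hi => [|n IH] lo hi lohi /=.
  by rewrite big_ord0 indicE mem_set // => -[].
pose V := (\prod_(i < n) (hi (lift ord0 i) - lo (lift ord0 i)))%R.
have slice x : lebn [set y : n.-tuple R | obox lo hi [tuple of x :: y]] =
    ((fun=> V%:E) \_ `]lo ord0, hi ord0[%classic) x.
  rewrite /patch; case: ifPn => [|xI].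
    rewrite inE /= in_itv /= => xI; rewrite -IH; last by move=> i; exact: lohi.
    congr lebn; apply/seteqP; split => y /= H i.
      by have := H (lift ord0 i); rewrite tnthS.
    by case: (unliftP ord0 i) => [j ->|->]; rewrite ?tnthS ?tnth0 //; exact: H.
  rewrite (_ : [set y | _] = set0) ?lebn0//; apply/seteqP; split => // y /= H.
  move: xI; have := H ord0; rewrite tnth0 => h /negP; apply.
  by rewrite inE /= in_itv /= h.
under eq_integral => x _ do rewrite slice.
rewrite -integral_mkcond integral_cst; last exact: measurable_itv.
set m := (X in V%:E * X).
have -> : m =
    if (lo ord0 < hi ord0)%R then (hi ord0)%:E - (lo ord0)%:E else 0.
  exact: lebesgue_measure_itv.
rewrite big_ord_recl.
have := lohi ord0; rewrite le_eqVlt => /orP[/eqP ->|lt].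
  by rewrite ltxx subrr mul0r mule0.
by rewrite lt -EFinB -EFinM mulrC.
Qed.

Definition corner_lo n (s : n.-tuple bool) (x : n.-tuple R) (r : 'I_n -> R) i : R :=
  if tnth s i then tnth x i else (tnth x i - r i)%R.
Definition corner_hi n (s : n.-tuple bool) (x : n.-tuple R) (r : 'I_n -> R) i : R :=
  if tnth s i then (tnth x i + r i)%R else tnth x i.
Definition corner_box n (s : n.-tuple bool) (x : n.-tuple R) (r : 'I_n -> R) :=
  obox (corner_lo s x r) (corner_hi s x r).

Lemma lebn_corner_box n s (x : n.-tuple R) r : (forall i, 0 <= r i)%R ->
  lebn (corner_box s x r) = (\prod_(i < n) r i)%:E.
Proof.
move=> r0; rewrite lebn_obox; last first.
  by move=> i; have := r0 i; rewrite /corner_lo /corner_hi; case: (tnth s i) => ?; lra.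
congr EFin; apply: eq_bigr => i _.
by rewrite /corner_lo /corner_hi; case: (tnth s i); ring.
Qed.

Lemma corner_box_orthant n s (x : n.-tuple R) r :
  corner_box s x r `<=` orthant s x.
Proof.
move=> y yc i; have := yc i; rewrite /corner_lo /corner_hi /side.
by case: (tnth s i) => /andP[? ?]; lra.
Qed.

Lemma corner_box_cbox n (a b : 'I_n -> R) s (x : n.-tuple R) r :
  (forall i, r i <= Num.min (tnth x i - a i) (b i - tnth x i))%R ->
  corner_box s x r `<=` cbox a b.
Proof.
move=> rx y yc i; have := yc i; have := rx i; rewrite le_min => /andP[ra rb].
rewrite /corner_lo /corner_hi.
by case: (tnth s i) => /andP[? ?]; apply/andP; split; lra.
Qed.

End LebesgueBoxes.

Section SublevelSets.
Variable R : realType.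
Local Open Scope ereal_scope.

Lemma cbox_convex n (a b : 'I_n -> R) : tconvex (cbox a b).
Proof.
move=> y z t yab zab /andP[t0 t1] i; rewrite tnth_tcomb.
have /andP[ya yb] := yab i; have /andP[za zb] := zab i.
have q1 : (0 <= (1 - t) * (tnth y i - a i))%R by apply: mulr_ge0; lra.
have q2 : (0 <= t * (tnth z i - a i))%R by apply: mulr_ge0; lra.
have q3 : (0 <= (1 - t) * (b i - tnth y i))%R by apply: mulr_ge0; lra.
have q4 : (0 <= t * (b i - tnth z i))%R by apply: mulr_ge0; lra.
by apply/andP; split; nra.
Qed.

Lemma sublevel_convex n (D : set (n.-tuple R)) (u : n.-tuple R -> \bar R) (c : R) :
  tconvex D -> convex_on_ext D u -> tconvex [set y | D y /\ u y <= c%:E].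
Proof.
move=> Dc uc y z t [Dy uy] [Dz uz] t01; split; first exact: Dc.
apply: le_trans (uc y z Dy Dz t t01) _; move/andP: t01 => [t0 t1].
have -> : c%:E = (1 - t)%:E * c%:E + t%:E * c%:E.
  by rewrite -!EFinM -EFinD -mulrDl subrK mul1r.
by apply: leeD; apply: lee_wpmul2l => //; rewrite lee_fin; lra.
Qed.

(* The convex sublevel set {u <= c} misses x, hence misses
   an orthant of x, and the corner box of sides r_i in that orthant lies
   inside the box where u > c. *)
Lemma integral_ge_level_box n (a b : 'I_n -> R) (u : n.-tuple R -> \bar R)
    (x : n.-tuple R) (c : R) :
  (forall y, cbox a b y -> 0 <= u y) -> convex_on_ext (cbox a b) u ->
  obox a b x -> (0 <= c)%R -> c%:E < u x ->
  c%:E * (\prod_(i < n) Num.min (tnth x i - a i) (b i - tnth x i))%:E <=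
  \int[lebn (n := n)]_(y in cbox a b) u y.
Proof.
move=> u0 uc xab c0 cux.
pose r i := Num.min (tnth x i - a i)%R (b i - tnth x i)%R.
have r0 i : (0 <= r i)%R by have /andP[? ?] := xab i; rewrite le_min !subr_ge0 !ltW.
have [s sK] : exists s, forall y, orthant s x y -> ~ (cbox a b y /\ u y <= c%:E).
  apply: tconvex_avoid_orthant; first exact/sublevel_convex/uc/cbox_convex.
  by case=> _; rewrite leNgt cux.
rewrite -(lebn_corner_box s x r0); apply: integral_ge_level => //.
- exact: lebn0.
- exact: obox_measurable.
- exact: corner_box_cbox.
move=> y yc; rewrite leNgt; apply/negP => uyc.
apply: (sK y (corner_box_orthant yc)); split; last exact: ltW.
exact: corner_box_cbox yc.
Qed.

Lemma le_mul_inv_of_levels (v I : \bar R) (P : R) : (0 < P)%R -> 0 <= I ->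
  (forall c : R, (0 <= c)%R -> c%:E < v -> c%:E * P%:E <= I) ->
  v <= I * (P^-1)%:E.
Proof.
move=> P0 I0 lev; case: I I0 lev => [i| |] //= i0 lev; last first.
  by rewrite gt0_mulye ?leey // lte_fin invr_gt0.
rewrite -EFinM leNgt; apply/negP => iv.
have iP0 : (0 <= i / P)%R by rewrite divr_ge0 // ?ltW // -lee_fin.
have [c ic cv] : exists2 c, (i / P < c)%R & c%:E < v.
  case: v iv {lev} => [v| |] //= iv.
    by rewrite lte_fin in iv; exists ((i / P + v) / 2)%R; rewrite ?lte_fin; lra.
  by exists (i / P + 1)%R; rewrite ?ltry //; lra.
have := lev c (le_trans iP0 (ltW ic)) cv; rewrite -EFinM lee_fin -ler_pdivlMr //.
by rewrite leNgt ic.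
Qed.

End SublevelSets.

(* Main theorem: apply the level bound to every level below u x. *)
Theorem mainTheorem1 (R : realType) (n : nat) (a b : 'I_n -> R)
  (u : n.-tuple R -> \bar R) :
  (forall i, a i < b i) ->
  (forall x, cbox a b x -> (0 <= u x)%E) ->
  convex_on_ext (cbox a b) u ->
  forall x, obox a b x ->
    (u x <= (\int[lebn (n := n)]_(y in cbox a b) u y) *
            ((\prod_(i < n) Num.min (tnth x i - a i) (b i - tnth x i))^-1)%:E)%E.
Proof.
move=> _ u0 uc x xab; apply: le_mul_inv_of_levels.
- apply: prodr_gt0 => i _; have /andP[? ?] := xab i.
  by rewrite lt_min !subr_gt0.
- by apply: integral_ge0_setfun u0; exact: lebn0.
- by move=> c c0 cux; exact: integral_ge_level_box.
Qed.
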